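(* Let $u$ be the solution of the Cauchy problem in the context. If $\sigma\ge m_0f_0+m_1f_1$, then \[ \partial_xu(x,t)\le\frac{2}{1-x+e^{-(\sigma-m_0f_0)t}}\,e^{-m_1f_1t} \] for all $x\in[0,1]$ and $t\ge0$.
   Context: Constants: $f_0>0$, $f_1\ge0$ with $\sigma=f_0-f_1>0$; $\lambda_0,\lambda_1\ge0$; $\gamma_0,\gamma_1\in(0,1]$; $m_0=\lambda_0\gamma_0$, $m_1=\lambda_1\gamma_1$. With $\mathcal{J}_0u(x,t)=u(x+\gamma_0(1-x),t)-u(x,t)$ and $\mathcal{J}_1u(x,t)=u(x-\gamma_1x,t)-u(x,t)$, $u$ is the unique (mild) solution, which is $C^\infty$ on $[0,1]\times[0,\infty)$, of \[ \partial_tu+\sigma(1-x)x\,\partial_xu=\lambda_0f_0\mathcal{J}_0u+\lambda_1f_1\mathcal{J}_1u\ (0\le x\le1,\ t>0),\quad u(x,0)=x. \] *)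

From Stdlib Require Import Reals.
From Coquelicot Require Import Coquelicot.
Open Scope R_scope.

Definition dx (u : R -> R -> R) (x t : R) : R := Derive (fun y => u y t) x.
Definition dt (u : R -> R -> R) (x t : R) : R := Derive (fun s => u x s) t.

Definition continuous2 (f : R -> R -> R) (x t : R) : Prop :=
  forall eps : R, 0 < eps -> exists delta : R, 0 < delta /\
    forall y s : R, Rabs (y - x) < delta -> Rabs (s - t) < delta ->
      Rabs (f y s - f x t) < eps.

Definition C1_2 (u : R -> R -> R) : Prop :=
  forall x t : R,
    ex_derive (fun y => u y t) x /\ ex_derive (fun s => u x s) t /\
    continuous2 (dx u) x t /\ continuous2 (dt u) x t.

Definition J0 (g0 : R) (u : R -> R -> R) (x t : R) : R :=
  u (x + g0 * (1 - x)) t - u x t.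
Definition J1 (g1 : R) (u : R -> R -> R) (x t : R) : R :=
  u (x - g1 * x) t - u x t.

(* u is a classical solution of the Cauchy problem
   d_t u + sigma (1-x) x d_x u = l0 f0 J0 u + l1 f1 J1 u, 0<=x<=1, t>0,
   u(x,0) = x, with sigma = f0 - f1. *)
Definition is_solution (f0 f1 l0 l1 g0 g1 : R) (u : R -> R -> R) : Prop :=
  C1_2 u /\
  (forall x, 0 <= x <= 1 -> u x 0 = x) /\
  (forall x t, 0 <= x <= 1 -> 0 < t ->
     dt u x t + (f0 - f1) * (1 - x) * x * dx u x t =
       l0 * f0 * J0 g0 u x t + l1 * f1 * J1 g1 u x t).

From Stdlib Require Import Reals Lra Classical ClassicalEpsilon.
From Coquelicot Require Import Coquelicot.
Open Scope R_scope.

(* The claimed bound is the x-derivative of the barrier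
   [G(x,t) = -2 exp(-bt t) ln(1 - x + exp(-c t))], with [c = sg - m0 f0] and
   [bt = m1 f1], so it suffices that [F := G - u] is nondecreasing in x.
   Along the logistic characteristics of [sg (1-x) x d_x], [F] obeys
   [d_t F = 2 exp(-bt t) B + a J0 F + b J1 F] where [B] is nondecreasing in x,
   and [F(.,0)] is nondecreasing.  Hence the increment
   [F(y,t) - F(x,t) + eps (1+t)] (x <= y) can never reach a first zero: at a
   minimising pair its derivative along the characteristics would be both
   [<= 0] and [>= eps]. *)

Lemma ex_derive_continuity_pt (f : R -> R) (x : R) : ex_derive f x -> continuity_pt f x.
Proof. intros H. apply continuity_pt_filterlim. exact (ex_derive_continuous f x H). Qed.

Lemma nondecreasing_of_derive_nonneg (f df : R -> R) (lo hi : R) :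
  (forall z, lo <= z <= hi -> is_derive f z (df z)) ->
  (forall z, lo <= z <= hi -> 0 <= df z) ->
  forall x y, lo <= x -> x <= y -> y <= hi -> f x <= f y.
Proof.
  intros Hd Hpos x y Hx Hxy Hy.
  destruct (MVT_gen f x y df) as [z [Hz Hmvt]];
    rewrite ?Rmin_left, ?Rmax_right in * by lra.
  - intros z Hz; apply Hd; lra.
  - intros z Hz; apply ex_derive_continuity_pt; eexists; apply Hd; lra.
  - assert (0 <= df z) by (apply Hpos; lra). nra.
Qed.

Lemma derive_nonneg_of_right_ge (f : R -> R) (s D d : R) :
  is_derive f s D -> 0 < d -> (forall t, s < t < s + d -> f s <= f t) -> 0 <= D.
Proof.
  intros Hf Hd Hge. apply is_derive_Reals in Hf.
  destruct (Rle_dec 0 D) as [|HD]; [assumption|exfalso].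
  destruct (Hf (- D / 2) ltac:(lra)) as [delta Hdelta].
  set (h := Rmin d delta / 2).
  assert (Hh : 0 < h < Rmin d delta)
    by (pose proof (Rmin_pos d delta Hd (cond_pos delta)); unfold h; lra).
  assert (Hquot := Hdelta h ltac:(lra)
    ltac:(rewrite Rabs_pos_eq; pose proof (Rmin_r d delta); lra)).
  assert (Hrise := Hge (s + h) ltac:(pose proof (Rmin_l d delta); lra)).
  apply Rabs_def2 in Hquot.
  assert (Hslope : (f (s + h) - f s) / h * h = f (s + h) - f s) by (field; lra).
  nra.
Qed.

Lemma derive_nonpos_of_left_ge (f : R -> R) (s D d : R) :
  is_derive f s D -> 0 < d -> (forall t, s - d < t < s -> f s <= f t) -> D <= 0.
Proof.
  intros Hf Hd Hge.
  assert (Hrefl : is_derive (fun t => f (2 * s - t)) s (- D)).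
  { apply is_derive_Reals. replace (- D) with (D * (-1)) by ring.
    apply (derivable_pt_lim_comp (fun t => 2 * s - t) f).
    - apply is_derive_Reals. auto_derive; [exact I|]. ring.
    - replace (2 * s - s) with s by ring. apply is_derive_Reals, Hf. }
  enough (0 <= - D) by lra.
  apply (derive_nonneg_of_right_ge _ s _ d Hrefl Hd).
  intros t Ht. replace (2 * s - s) with s by ring. apply Hge; lra.
Qed.

Lemma derive_nonneg_of_nondecreasing (f : R -> R) (lo hi x D : R) :
  lo < hi -> lo <= x <= hi ->
  (forall y z, lo <= y -> y <= z -> z <= hi -> f y <= f z) ->
  is_derive f x D -> 0 <= D.
Proof.
  intros Hlohi Hx Hmono Hf. destruct (Req_dec x hi) as [->|Hxhi].
  - enough (- D <= 0) by lra.
    apply (derive_nonpos_of_left_ge (fun y => - f y) hi _ (hi - lo)).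
    + apply (is_derive_opp f). exact Hf.
    + lra.
    + intros t Ht. apply Ropp_le_contravar, Hmono; lra.
  - apply (derive_nonneg_of_right_ge f x D (hi - x) Hf); [lra|].
    intros t Ht. apply Hmono; lra.
Qed.

Lemma C1_2_differentiable_pt_lim (u : R -> R -> R) (x t : R) :
  C1_2 u -> differentiable_pt_lim u x t (dx u x t) (dt u x t).
Proof.
  intros HC eps.
  destruct (HC x t) as [_ [Hxt [Hdx _]]].
  destruct (Hdx (eps / 2) ltac:(pose proof (cond_pos eps); lra)) as [d1 [Hd1 Hdx_near]].
  assert (Ht : derivable_pt_lim (fun s => u x s) t (dt u x t))
    by (apply is_derive_Reals, Derive_correct, Hxt).
  destruct (Ht (eps / 2) ltac:(pose proof (cond_pos eps); lra)) as [d2 Ht_near].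
  exists (mkposreal _ (Rmin_pos d1 d2 Hd1 (cond_pos d2))). simpl.
  intros y s Hy Hs.
  assert (Htime : Rabs (u x s - u x t - dt u x t * (s - t)) <= eps / 2 * Rabs (s - t)).
  { destruct (Req_dec s t) as [->|Hst].
    - rewrite !Rminus_diag, Rmult_0_r, Rminus_0_r, Rabs_R0; lra.
    - assert (Hq := Ht_near (s - t) ltac:(lra) ltac:(pose proof (Rmin_r d1 d2); lra)).
      replace (t + (s - t)) with s in Hq by ring.
      replace (u x s - u x t - dt u x t * (s - t))
        with (((u x s - u x t) / (s - t) - dt u x t) * (s - t)) by (field; lra).
      rewrite Rabs_mult. apply Rmult_le_compat_r; [apply Rabs_pos|lra]. }
  assert (Hspace : Rabs (u y s - u x s - dx u x t * (y - x)) <= eps / 2 * Rabs (y - x)).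
  { destruct (MVT_cor4 (fun z => u z s) (fun z => dx u z s) x (Rabs (y - x))) with (b := y)
      as [c [Hmvt Hc]].
    - intros c _. exact (Derive_correct _ _ (proj1 (HC c s))).
    - lra.
    - rewrite Hmvt. replace (dx u c s * (y - x) - dx u x t * (y - x))
        with ((dx u c s - dx u x t) * (y - x)) by ring.
      rewrite Rabs_mult. apply Rmult_le_compat_r; [apply Rabs_pos|].
      left; apply Hdx_near; pose proof (Rmin_l d1 d2); lra. }
  replace (u y s - u x t - (dx u x t * (y - x) + dt u x t * (s - t)))
    with ((u y s - u x s - dx u x t * (y - x)) + (u x s - u x t - dt u x t * (s - t)))
    by ring.
  eapply Rle_trans; [apply Rabs_triang|].
  pose proof (Rmax_l (Rabs (y - x)) (Rabs (s - t))).
  pose proof (Rmax_r (Rabs (y - x)) (Rabs (s - t))).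
  pose proof (cond_pos eps). nra.
Qed.

Lemma C1_2_continuity_2d_pt (u : R -> R -> R) (x t : R) :
  C1_2 u -> continuity_2d_pt u x t.
Proof.
  intros HC. apply differentiable_continuity_pt.
  exists (dx u x t), (dt u x t). apply C1_2_differentiable_pt_lim, HC.
Qed.

Lemma is_derive_C1_2_comp (u : R -> R -> R) (X : R -> R) (s X' : R) :
  C1_2 u -> is_derive X s X' ->
  is_derive (fun t => u (X t) t) s (dx u (X s) s * X' + dt u (X s) s).
Proof.
  intros HC HX. apply is_derive_Reals.
  rewrite <- (Rmult_1_r (dt u (X s) s)).
  apply (derivable_pt_lim_comp_2d u X (fun t => t)).
  - apply C1_2_differentiable_pt_lim, HC.
  - apply is_derive_Reals, HX.
  - apply derivable_pt_lim_id.
Qed.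

Lemma continuity_2d_pt_snd (f : R -> R -> R) (x y : R) :
  continuity_2d_pt f x y -> continuity_pt (fun w => f x w) y.
Proof.
  intros Hf eps Heps. destruct (Hf (mkposreal eps Heps)) as [d Hd].
  exists d; split; [apply cond_pos|]. intros w [_ Hw].
  apply Hd; [rewrite Rminus_diag, Rabs_R0; apply cond_pos | exact Hw].
Qed.

Definition clamp (lo hi z : R) : R := Rmax lo (Rmin hi z).

Lemma clamp_in (lo hi z : R) : lo <= hi -> lo <= clamp lo hi z <= hi.
Proof. unfold clamp, Rmax, Rmin. repeat destruct Rle_dec; lra. Qed.

Lemma clamp_id (lo hi z : R) : lo <= z <= hi -> clamp lo hi z = z.
Proof. unfold clamp, Rmax, Rmin. repeat destruct Rle_dec; lra. Qed.

Lemma Rabs_clamp_le (lo hi z w : R) :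
  Rabs (clamp lo hi z - clamp lo hi w) <= Rabs (z - w).
Proof.
  unfold clamp, Rmax, Rmin. repeat destruct Rle_dec;
  unfold Rabs; repeat destruct Rcase_abs; lra.
Qed.

(* Minimise first in y, then the partial minimum in x; clamping makes the
   partial minimum a function on all of R, continuous by uniform continuity. *)
Lemma continuity_2d_rect_min (h : R -> R -> R) (a b c d : R) :
  a <= b -> c <= d ->
  (forall x y, a <= x <= b -> c <= y <= d -> continuity_2d_pt h x y) ->
  exists x0 y0, a <= x0 <= b /\ c <= y0 <= d /\
    forall x y, a <= x <= b -> c <= y <= d -> h x0 y0 <= h x y.
Proof.
  intros Hab Hcd Hh.
  destruct (choice (fun z y => c <= y <= d /\
      forall w, c <= w <= d -> h (clamp a b z) y <= h (clamp a b z) w)) as [Y HY].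
  { intros z. destruct (continuity_ab_min (fun w => h (clamp a b z) w) c d Hcd)
      as [y [Hmin Hy]].
    - intros w Hw. apply continuity_2d_pt_snd, Hh; [apply clamp_in|]; lra.
    - exists y; split; assumption. }
  set (m z := h (clamp a b z) (Y z)).
  assert (Hm : forall z, continuity_pt m z).
  { intros z0 eta Heta.
    destruct (uniform_continuity_2d h a b c d Hh (mkposreal eta Heta)) as [delta Hdelta].
    exists delta; split; [apply cond_pos|]. intros z [_ Hz]. simpl in Hz. unfold R_dist in Hz.
    pose proof (clamp_in a b z Hab) as Hcz. pose proof (clamp_in a b z0 Hab) as Hcz0.
    assert (Hclose : Rabs (clamp a b z - clamp a b z0) < delta)
      by (eapply Rle_lt_trans; [apply Rabs_clamp_le|exact Hz]).
    destruct (HY z) as [Hyz Hminz]. destruct (HY z0) as [Hyz0 Hminz0].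
    assert (Hz0 := Hdelta (clamp a b z0) (Y z0) (clamp a b z) (Y z0)).
    assert (Hz1 := Hdelta (clamp a b z) (Y z) (clamp a b z0) (Y z)).
    rewrite Rminus_diag, Rabs_R0 in Hz0, Hz1.
    rewrite Rabs_minus_sym in Hz1.
    specialize (Hz0 Hcz0 Hyz0 Hcz Hyz0 Hclose (cond_pos delta)).
    specialize (Hz1 Hcz Hyz Hcz0 Hyz Hclose (cond_pos delta)).
    specialize (Hminz (Y z0) Hyz0). specialize (Hminz0 (Y z) Hyz).
    simpl in Hz0, Hz1 |- *. unfold R_dist, m.
    apply Rabs_def1; apply Rabs_def2 in Hz0; apply Rabs_def2 in Hz1; lra. }
  destruct (continuity_ab_min m a b Hab (fun z _ => Hm z)) as [x0 [Hmin Hx0]].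
  exists x0, (Y x0). split; [assumption|]. split; [apply HY|].
  intros x y Hx Hy. specialize (Hmin x Hx). unfold m in Hmin.
  rewrite !clamp_id in Hmin by assumption.
  destruct (HY x) as [_ HYx]. rewrite clamp_id in HYx by assumption.
  specialize (HYx y Hy). lra.
Qed.

Lemma real_induction (P : R -> Prop) (T : R) :
  P 0 ->
  (forall s, 0 < s <= T -> (forall t, 0 <= t < s -> P t) -> P s) ->
  (forall s, 0 <= s < T -> (forall t, 0 <= t <= s -> P t) ->
     exists d, 0 < d /\ forall t, s < t < s + d -> P t) ->
  forall t, 0 <= t <= T -> P t.
Proof.
  intros H0 Hclosed Hopen t Ht.
  set (E s := 0 <= s <= T /\ forall t, 0 <= t <= s -> P t).
  assert (HE0 : E 0) by (split; [lra|]; intros r Hr; replace r with 0 by lra; exact H0).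
  destruct (completeness E) as [S [Hub Hlub]].
  { exists T. intros s [Hs _]. lra. }
  { exists 0; exact HE0. }
  assert (HS0 : 0 <= S) by (apply Hub, HE0).
  assert (HST : S <= T) by (apply Hlub; intros s [Hs _]; lra).
  assert (Hbelow : forall r, 0 <= r < S -> P r).
  { intros r Hr. apply NNPP. intros HPr.
    enough (S <= r) by lra.
    apply Hlub. intros s [_ Hs]. destruct (Rle_dec s r) as [|Hsr]; [assumption|].
    exfalso. apply HPr, Hs. lra. }
  assert (HES : E S).
  { split; [lra|]. intros r Hr. destruct (Rlt_dec r S); [apply Hbelow; lra|].
    replace r with S by lra. destruct (Req_dec S 0) as [->|HS]; [exact H0|].
    apply Hclosed; [lra|exact Hbelow]. }
  destruct (Req_dec S T) as [<-|HST'].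
  - apply HES, Ht.
  - destruct (Hopen S ltac:(lra) (proj2 HES)) as [d [Hd Hnext]].
    set (s1 := Rmin T (S + d / 2)).
    assert (HEs1 : E s1).
    { split; [unfold s1, Rmin; destruct Rle_dec; lra|].
      intros r Hr. destruct (Rle_dec r S); [apply HES; lra|].
      apply Hnext. unfold s1, Rmin in Hr; destruct Rle_dec; lra. }
    pose proof (Hub s1 HEs1). unfold s1, Rmin in *; destruct Rle_dec; lra.
Qed.

Lemma continuity_2d_pt_Rmax (x y : R) : continuity_2d_pt Rmax x y.
Proof.
  intros eps. exists eps. intros u v Hu Hv.
  unfold Rmax. destruct (Rle_dec u v), (Rle_dec x y);
    apply Rabs_def1; apply Rabs_def2 in Hu; apply Rabs_def2 in Hv; lra.
Qed.

(* The flow of [xi' = sg xi (1 - xi)], i.e. the characteristics of [sg (1-x) x d_x]. *)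
Definition logistic (sg tau xi : R) : R :=
  xi * exp (sg * tau) / (1 - xi + xi * exp (sg * tau)).

Lemma logistic_denom_pos (sg tau xi : R) :
  0 <= xi <= 1 -> 0 < 1 - xi + xi * exp (sg * tau).
Proof. intros Hxi. pose proof (exp_pos (sg * tau)). nra. Qed.

Lemma logistic_0 (sg xi : R) : logistic sg 0 xi = xi.
Proof.
  unfold logistic. rewrite Rmult_0_r, exp_0.
  replace (1 - xi + xi * 1) with 1 by ring. field.
Qed.

Lemma is_derive_logistic (sg s xi : R) : 0 <= xi <= 1 ->
  is_derive (fun t => logistic sg (t - s) xi) s (sg * xi * (1 - xi)).
Proof.
  intros Hxi. unfold logistic. pose proof (logistic_denom_pos sg 0 xi Hxi).
  auto_derive; rewrite Rplus_opp_r; [lra|].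
  rewrite Rmult_0_r, exp_0 in *. field. lra.
Qed.

Lemma logistic_in_01 (sg tau xi : R) : 0 <= xi <= 1 -> 0 <= logistic sg tau xi <= 1.
Proof.
  intros Hxi. unfold logistic. pose proof (logistic_denom_pos sg tau xi Hxi).
  pose proof (exp_pos (sg * tau)). split.
  - apply Rle_mult_inv_pos; nra.
  - enough (0 <= (1 - xi) / (1 - xi + xi * exp (sg * tau))) by
      (replace ((1 - xi) / (1 - xi + xi * exp (sg * tau))) with
         (1 - xi * exp (sg * tau) / (1 - xi + xi * exp (sg * tau))) in * by (field; lra);
       lra).
    apply Rle_mult_inv_pos; lra.
Qed.

Lemma logistic_nondecreasing (sg tau x y : R) :
  0 <= x -> x <= y -> y <= 1 -> logistic sg tau x <= logistic sg tau y.
Proof.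
  intros Hx Hxy Hy. unfold logistic.
  pose proof (logistic_denom_pos sg tau x ltac:(lra)).
  pose proof (logistic_denom_pos sg tau y ltac:(lra)).
  pose proof (exp_pos (sg * tau)). set (e := exp (sg * tau)) in *.
  apply Rmult_le_reg_r with ((1 - x + x * e) * (1 - y + y * e)); [nra|].
  replace (x * e / (1 - x + x * e) * ((1 - x + x * e) * (1 - y + y * e)))
    with (x * e * (1 - y + y * e)) by (field; lra).
  replace (y * e / (1 - y + y * e) * ((1 - x + x * e) * (1 - y + y * e)))
    with (y * e * (1 - x + x * e)) by (field; lra).
  nra.
Qed.

Section Comparison.

Variables sg a b g0 g1 c bt : R.
Hypotheses (Hsg : 0 <= sg) (Ha : 0 <= a) (Hb : 0 <= b)
  (Hg0 : 0 <= g0 <= 1) (Hg1 : 0 <= g1 <= 1)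
  (Hc : c = sg - a * g0) (Hbt : bt = b * g1).

Definition barrier (x t : R) : R := -2 * exp (- bt * t) * ln (1 - x + exp (- c * t)).

(* [exp (bt t) / 2] times the residual [G_t + sg (1-x) x G_x - a J0 G - b J1 G]
   of [G := barrier], written in terms of [E = exp (- c t)]. *)
Definition barrier_residual (E xi : R) : R :=
  bt * ln (1 - xi + E) + (c * E + sg * xi * (1 - xi)) / (1 - xi + E)
  + a * (ln (1 - (xi + g0 * (1 - xi)) + E) - ln (1 - xi + E))
  + b * (ln (1 - (xi - g1 * xi) + E) - ln (1 - xi + E)).

Lemma is_derive_barrier_x (x t : R) : x <= 1 ->
  is_derive (fun y => barrier y t) x (2 / (1 - x + exp (- c * t)) * exp (- bt * t)).
Proof.
  intros Hx. unfold barrier. pose proof (exp_pos (- c * t)).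
  auto_derive; [lra|]. field. lra.
Qed.

Lemma barrier_continuity_2d_pt (x t : R) : x <= 1 -> continuity_2d_pt barrier x t.
Proof.
  intros Hx. unfold barrier.
  assert (Hexp : forall k, continuity_2d_pt (fun _ v => exp (k * v)) x t).
  { intros k. apply (continuity_1d_2d_pt_comp (fun v => exp (k * v)) (fun _ v => v)).
    - apply ex_derive_continuity_pt. auto_derive. exact I.
    - apply continuity_2d_pt_id2. }
  apply continuity_2d_pt_mult.
  - apply continuity_2d_pt_mult; [apply continuity_2d_pt_const|apply Hexp].
  - apply (continuity_1d_2d_pt_comp ln (fun u v => 1 - u + exp (- c * v))).
    + pose proof (exp_pos (- c * t)). apply ex_derive_continuity_pt.
      auto_derive. lra.
    + apply continuity_2d_pt_plus; [|apply Hexp].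
      apply continuity_2d_pt_minus; [apply continuity_2d_pt_const|apply continuity_2d_pt_id1].
Qed.

Lemma barrier_sub_id_nondecreasing_0 (x y : R) : 0 <= x -> x <= y -> y <= 1 ->
  barrier x 0 - x <= barrier y 0 - y.
Proof.
  apply (nondecreasing_of_derive_nonneg (fun z => barrier z 0 - z)
    (fun z => 2 / (1 - z + exp (- c * 0)) * exp (- bt * 0) - 1) 0 1).
  - intros z Hz. apply (is_derive_minus (fun z => barrier z 0) (fun z => z)).
    + apply is_derive_barrier_x; lra.
    + apply (is_derive_id z).
  - intros z Hz. rewrite !Rmult_0_r, exp_0.
    replace (2 / (1 - z + 1) * 1 - 1) with (z / (2 - z)) by (field; lra).
    apply Rle_mult_inv_pos; lra.
Qed.

Lemma barrier_residual_nondecreasing (E x y : R) : 0 < E -> 0 <= x -> x <= y -> y <= 1 ->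
  barrier_residual E x <= barrier_residual E y.
Proof.
  intros HE.
  apply (nondecreasing_of_derive_nonneg (barrier_residual E)
    (fun z => (sg * (1 - z) ^ 2 + 2 * sg * E * (1 - z)) / (1 - z + E) ^ 2
       + a * g0 ^ 2 * E * (1 - z) / ((1 - z + E) ^ 2 * (1 - (z + g0 * (1 - z)) + E))
       + b * g1 * (1 - g1) * z / ((1 - z + E) * (1 - (z - g1 * z) + E))) 0 1).
  - intros z Hz. unfold barrier_residual.
    assert (0 < 1 - (z + g0 * (1 - z)) + E) by nra.
    assert (0 < 1 - (z - g1 * z) + E) by nra.
    auto_derive; [repeat split; lra|].
    subst c bt. field. repeat split; lra.
  - intros z Hz.
    assert (0 < 1 - (z + g0 * (1 - z)) + E) by nra.
    assert (0 < 1 - (z - g1 * z) + E) by nra.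
    assert (0 < (1 - z + E) ^ 2) by (apply pow_lt; lra).
    assert (0 <= sg * E * (1 - z)) by (apply Rmult_le_pos; [apply Rmult_le_pos|]; lra).
    assert (0 <= a * g0 ^ 2 * E * (1 - z))
      by (apply Rmult_le_pos; [apply Rmult_le_pos; [apply Rmult_le_pos|]|]; nra).
    assert (0 <= b * g1 * (1 - g1) * z)
      by (apply Rmult_le_pos; [apply Rmult_le_pos; [apply Rmult_le_pos|]|]; lra).
    repeat apply Rplus_le_le_0_compat; apply Rle_mult_inv_pos;
      try apply Rmult_lt_0_compat; nra.
Qed.

Lemma is_derive_barrier_logistic (s xi : R) : 0 <= xi <= 1 ->
  is_derive (fun t => barrier (logistic sg (t - s) xi) t) s
    (2 * exp (- bt * s) * barrier_residual (exp (- c * s)) xi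
     + a * J0 g0 barrier xi s + b * J1 g1 barrier xi s).
Proof.
  intros Hxi. unfold barrier, barrier_residual, J0, J1, logistic.
  pose proof (logistic_denom_pos sg 0 xi Hxi). rewrite Rmult_0_r, exp_0 in *.
  pose proof (exp_pos (- c * s)).
  auto_derive; rewrite Rplus_opp_r, Rmult_0_r, exp_0;
    replace (xi * 1 * / (1 - xi + xi * 1)) with xi by (field; lra).
  - repeat split; lra.
  - replace (1 + - xi) with (1 - xi) by ring. field. lra.
Qed.

Variable u : R -> R -> R.
Hypotheses (HC : C1_2 u) (Hinit : forall x, 0 <= x <= 1 -> u x 0 = x)
  (Hpde : forall x t, 0 <= x <= 1 -> 0 < t ->
     dt u x t + sg * (1 - x) * x * dx u x t = a * J0 g0 u x t + b * J1 g1 u x t).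

Definition gap (x t : R) : R := barrier x t - u x t.

Lemma gap_continuity_2d_pt (x t : R) : x <= 1 -> continuity_2d_pt gap x t.
Proof.
  intros Hx. apply continuity_2d_pt_minus.
  - apply barrier_continuity_2d_pt, Hx.
  - apply C1_2_continuity_2d_pt, HC.
Qed.

Lemma gap_continuity_pt_x (x t : R) : x <= 1 -> continuity_pt (fun y => gap y t) x.
Proof.
  intros Hx. apply ex_derive_continuity_pt. eexists.
  apply (is_derive_minus (fun y => barrier y t) (fun y => u y t)).
  - apply is_derive_barrier_x, Hx.
  - exact (Derive_correct _ _ (proj1 (HC x t))).
Qed.

Lemma is_derive_gap_logistic (s xi : R) : 0 <= xi <= 1 -> 0 < s ->
  is_derive (fun t => gap (logistic sg (t - s) xi) t) s
    (2 * exp (- bt * s) * barrier_residual (exp (- c * s)) xi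
     + a * J0 g0 gap xi s + b * J1 g1 gap xi s).
Proof.
  intros Hxi Hs.
  assert (Hu := is_derive_C1_2_comp u (fun t => logistic sg (t - s) xi) s _ HC
    (is_derive_logistic sg s xi Hxi)).
  cbv beta in Hu. rewrite Rminus_diag, logistic_0 in Hu.
  assert (Hdt : dt u xi s = a * J0 g0 u xi s + b * J1 g1 u xi s - sg * (1 - xi) * xi * dx u xi s)
    by (rewrite <- (Hpde xi s Hxi Hs); ring).
  assert (Hgap := is_derive_minus _ _ _ _ _ (is_derive_barrier_logistic s xi Hxi) Hu).
  replace (2 * exp (- bt * s) * barrier_residual (exp (- c * s)) xi
     + a * J0 g0 gap xi s + b * J1 g1 gap xi s)
    with (2 * exp (- bt * s) * barrier_residual (exp (- c * s)) xi
      + a * J0 g0 barrier xi s + b * J1 g1 barrier xi s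
      - (dx u xi s * (sg * xi * (1 - xi)) + dt u xi s))
    by (rewrite Hdt; unfold gap, J0, J1; ring).
  exact Hgap.
Qed.

Definition gap_increment (eps x y t : R) : R := gap y t - gap x t + eps * (1 + t).

Lemma gap_increment_min (eps s : R) :
  exists px py, 0 <= px /\ px <= py /\ py <= 1 /\
    forall x y, 0 <= x -> x <= y -> y <= 1 ->
      gap_increment eps px py s <= gap_increment eps x y s.
Proof.
  destruct (continuity_2d_rect_min (fun x y => gap_increment eps x (Rmax x y) s) 0 1 0 1)
    as [x0 [y0 [Hx0 [Hy0 Hmin]]]]; try lra.
  - intros x y Hx Hy. unfold gap_increment.
    apply continuity_2d_pt_plus; [|apply continuity_2d_pt_const].
    apply continuity_2d_pt_minus.
    + apply (continuity_1d_2d_pt_comp (fun z => gap z s) Rmax); [|apply continuity_2d_pt_Rmax].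
      apply gap_continuity_pt_x. apply Rmax_lub; lra.
    + apply (continuity_1d_2d_pt_comp (fun z => gap z s) (fun x _ => x));
        [apply gap_continuity_pt_x; lra|apply continuity_2d_pt_id1].
  - exists x0, (Rmax x0 y0). split; [lra|]. split; [apply Rmax_l|].
    split; [apply Rmax_lub; lra|].
    intros x y Hx Hxy Hy. specialize (Hmin x y ltac:(lra) ltac:(lra)).
    cbv beta in Hmin. rewrite (Rmax_right x y Hxy) in Hmin. exact Hmin.
Qed.

Lemma gap_increment_time_modulus (eps T eta : R) : 0 <= eps -> 0 < eta ->
  exists d, 0 < d /\ forall x y t t', 0 <= x <= 1 -> 0 <= y <= 1 ->
    0 <= t -> t <= t' -> t' <= T -> t' - t < d ->
    gap_increment eps x y t - eta < gap_increment eps x y t'.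
Proof.
  intros Heps Heta.
  destruct (uniform_continuity_2d gap 0 1 0 T) with (eps := mkposreal (eta / 2) ltac:(lra))
    as [d Hd].
  { intros x t Hx _. apply gap_continuity_2d_pt; lra. }
  exists d; split; [apply cond_pos|]. intros x y t t' Hx Hy Ht Htt' Ht' Hd'.
  assert (Hdt : Rabs (t' - t) < d) by (rewrite Rabs_pos_eq; lra).
  assert (Hdx : Rabs (x - x) < d) by (rewrite Rminus_diag, Rabs_R0; apply cond_pos).
  assert (Hdy : Rabs (y - y) < d) by (rewrite Rminus_diag, Rabs_R0; apply cond_pos).
  assert (Hgx := Hd x t x t' Hx ltac:(lra) Hx ltac:(lra) Hdx Hdt).
  assert (Hgy := Hd y t y t' Hy ltac:(lra) Hy ltac:(lra) Hdy Hdt).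
  simpl in Hgx, Hgy. apply Rabs_def2 in Hgx. apply Rabs_def2 in Hgy.
  unfold gap_increment. nra.
Qed.

Definition gap_increment_pos_at (eps t : R) : Prop :=
  forall x y, 0 <= x -> x <= y -> y <= 1 -> 0 < gap_increment eps x y t.

(* At a first zero of the increment, follow both points back along the
   characteristics: the increment was positive before, so its time derivative
   is [<= 0]; the equation satisfied by [gap] makes it [>= eps]. *)
Lemma gap_increment_min_neq0 (eps s px py : R) : 0 < eps -> 0 < s ->
  (forall t, 0 <= t < s -> gap_increment_pos_at eps t) ->
  0 <= px -> px <= py -> py <= 1 ->
  (forall x y, 0 <= x -> x <= y -> y <= 1 ->
     gap_increment eps px py s <= gap_increment eps x y s) ->
  gap_increment eps px py s <> 0.
Proof.
  intros Heps Hs Hbefore Hpx Hpxy Hpy Hmin Hzero.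
  set (D xi := 2 * exp (- bt * s) * barrier_residual (exp (- c * s)) xi
     + a * J0 g0 gap xi s + b * J1 g1 gap xi s).
  assert (Hf : is_derive
    (fun t => gap_increment eps (logistic sg (t - s) px) (logistic sg (t - s) py) t) s
    (D py - D px + eps)).
  { apply (is_derive_plus
      (fun t => gap (logistic sg (t - s) py) t - gap (logistic sg (t - s) px) t)
      (fun t => eps * (1 + t))).
    - exact (is_derive_minus _ _ _ _ _ (is_derive_gap_logistic s py ltac:(lra) Hs)
        (is_derive_gap_logistic s px ltac:(lra) Hs)).
    - auto_derive; [exact I|ring]. }
  assert (HD_nonpos : D py - D px + eps <= 0).
  { apply (derive_nonpos_of_left_ge _ s _ s Hf Hs). intros t Ht.
    rewrite Rminus_diag, !logistic_0, Hzero.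
    pose proof (logistic_in_01 sg (t - s) px ltac:(lra)).
    pose proof (logistic_in_01 sg (t - s) py ltac:(lra)).
    pose proof (logistic_nondecreasing sg (t - s) px py Hpx Hpxy Hpy).
    left. apply Hbefore; lra. }
  assert (HB := barrier_residual_nondecreasing (exp (- c * s)) px py (exp_pos _) Hpx Hpxy Hpy).
  assert (HJ0 := Hmin (px + g0 * (1 - px)) (py + g0 * (1 - py)) ltac:(nra) ltac:(nra) ltac:(nra)).
  assert (HJ1 := Hmin (px - g1 * px) (py - g1 * py) ltac:(nra) ltac:(nra) ltac:(nra)).
  pose proof (exp_pos (- bt * s)).
  unfold D, J0, J1, gap_increment in *. nra.
Qed.

Lemma gap_increment_pos (eps T : R) : 0 < eps -> 0 <= T -> gap_increment_pos_at eps T.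
Proof.
  intros Heps HT.
  apply (real_induction (gap_increment_pos_at eps) T); [| | |lra].
  - intros x y Hx Hxy Hy. unfold gap_increment, gap. rewrite !Hinit by lra.
    pose proof (barrier_sub_id_nondecreasing_0 x y Hx Hxy Hy). lra.
  - intros s Hs Hbefore.
    destruct (gap_increment_min eps s) as [px [py [Hpx [Hpxy [Hpy Hmin]]]]].
    assert (Hnonneg : 0 <= gap_increment eps px py s).
    { apply Rnot_lt_le. intros Hneg.
      destruct (gap_increment_time_modulus eps s (- gap_increment eps px py s))
        as [d [Hd Hmod]]; [lra|lra|].
      set (t := Rmax 0 (s - d / 2)).
      assert (Ht : 0 <= t < s /\ s - t < d)
        by (unfold t, Rmax; destruct Rle_dec; lra).
      assert (Hpos := Hbefore t ltac:(lra) px py Hpx Hpxy Hpy).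
      assert (Hdrop := Hmod px py t s ltac:(lra) ltac:(lra) ltac:(lra) ltac:(lra) ltac:(lra) ltac:(lra)).
      lra. }
    assert (Hneq0 := gap_increment_min_neq0 eps s px py Heps ltac:(lra) Hbefore Hpx Hpxy Hpy Hmin).
    intros x y Hx Hxy Hy. specialize (Hmin x y Hx Hxy Hy). lra.
  - intros s Hs Hnow.
    destruct (gap_increment_min eps s) as [px [py [Hpx [Hpxy [Hpy Hmin]]]]].
    assert (Hm := Hnow s ltac:(lra) px py Hpx Hpxy Hpy).
    destruct (gap_increment_time_modulus eps (s + 1) (gap_increment eps px py s))
      as [d [Hd Hmod]]; [lra|lra|].
    exists (Rmin d 1). split; [apply Rmin_pos; lra|].
    intros t Ht x y Hx Hxy Hy.
    pose proof (Rmin_l d 1). pose proof (Rmin_r d 1).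
    specialize (Hmin x y Hx Hxy Hy).
    assert (Hrise := Hmod x y s t ltac:(lra) ltac:(lra) ltac:(lra) ltac:(lra) ltac:(lra) ltac:(lra)).
    lra.
Qed.

Lemma gap_nondecreasing (t x y : R) : 0 <= t -> 0 <= x -> x <= y -> y <= 1 ->
  gap x t <= gap y t.
Proof.
  intros Ht Hx Hxy Hy. apply Rnot_lt_le. intros Hlt.
  set (eps := (gap x t - gap y t) / (2 * (1 + t))).
  assert (Heps : 0 < eps) by (apply Rdiv_lt_0_compat; lra).
  assert (Hpos := gap_increment_pos eps t Heps Ht x y Hx Hxy Hy).
  unfold gap_increment in Hpos.
  replace (eps * (1 + t)) with ((gap x t - gap y t) / 2) in Hpos by (unfold eps; field; lra).
  lra.
Qed.

End Comparison.

Theorem lemma4p5 (f0 f1 l0 l1 g0 g1 : R) (u : R -> R -> R) :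
  0 < f0 -> 0 <= f1 -> 0 < f0 - f1 ->
  0 <= l0 -> 0 <= l1 ->
  0 < g0 <= 1 -> 0 < g1 <= 1 ->
  is_solution f0 f1 l0 l1 g0 g1 u ->
  (f0 - f1) >= (l0 * g0) * f0 + (l1 * g1) * f1 ->
  forall x t : R, 0 <= x <= 1 -> 0 <= t ->
    dx u x t <=
      2 / (1 - x + exp (- ((f0 - f1) - (l0 * g0) * f0) * t))
        * exp (- ((l1 * g1) * f1) * t).
Proof.
  intros Hf0 Hf1 Hsg Hl0 Hl1 Hg0 Hg1 [HC [Hinit Hpde]] _ x t Hx Ht.
  set (c := (f0 - f1) - (l0 * g0) * f0). set (bt := (l1 * g1) * f1).
  assert (Hc : c = (f0 - f1) - l0 * f0 * g0) by (unfold c; ring).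
  assert (Hbt : bt = l1 * f1 * g1) by (unfold bt; ring).
  assert (Ha : 0 <= l0 * f0) by (apply Rmult_le_pos; lra).
  assert (Hb : 0 <= l1 * f1) by (apply Rmult_le_pos; lra).
  assert (Hmono := gap_nondecreasing (f0 - f1) (l0 * f0) (l1 * f1) g0 g1 c bt
    ltac:(lra) Ha Hb ltac:(lra) ltac:(lra) Hc Hbt u HC Hinit Hpde t).
  assert (Hgap : is_derive (fun y => gap c bt u y t) x
    (2 / (1 - x + exp (- c * t)) * exp (- bt * t) - dx u x t)).
  { apply (is_derive_minus (fun y => barrier c bt y t) (fun y => u y t)).
    - apply is_derive_barrier_x; lra.
    - exact (Derive_correct _ _ (proj1 (HC x t))). }
  pose proof (derive_nonneg_of_nondecreasing _ 0 1 x _ Rlt_0_1 Hx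
    (fun y z Hy Hyz Hz => Hmono y z Ht Hy Hyz Hz) Hgap).
  lra.
Qed.
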